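(* Let $A\in\mathbb{R}^{n\times n}$ and $\alpha>0$ be given, and consider the linear system $\dot x=Ax$, $x\in\mathbb{R}^n$. The system is stable if there exists a symmetric positive definite matrix $P\in\mathbb{R}^{n\times n}$ such that at least one of the following conditions holds: 1) for some $\beta\ge1$ with either $\beta=1$, or $\beta>1$ and $\mathrm{trace}(A)\le0$: $A^{\rm T}P+PA-\frac{1}{\alpha}\frac{\beta-1}{\beta+1}\mathrm{trace}(A)P<0$; 2) $A^{\rm T}P+PA-\frac{1}{\alpha}\mathrm{trace}(A)P<0$ and $A^{\rm T}P+PA+\frac{1}{\alpha}\mathrm{trace}(A)P<0$.
   Context: Matrix inequalities $M<0$ mean that the symmetric matrix $M$ is negative definite. Stability is in the sense of Lyapunov. *)

From HB Require Import structures.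
From mathcomp Require Import all_boot all_order all_algebra.
From mathcomp Require Import all_classical all_reals all_analysis.
Set Implicit Arguments. Unset Strict Implicit. Unset Printing Implicit Defensive.
Import Order.TTheory GRing.Theory Num.Theory.
Import numFieldNormedType.Exports.
Local Open Scope ring_scope.

Definition posdef {R : realType} {n : nat} (M : 'M[R]_n) : Prop :=
  M^T = M /\ forall x : 'cV[R]_n, x != 0 -> 0 < (x^T *m M *m x) 0 0.

Definition negdef {R : realType} {n : nat} (M : 'M[R]_n) : Prop :=
  M^T = M /\ forall x : 'cV[R]_n, x != 0 -> (x^T *m M *m x) 0 0 < 0.

Definition lin_solution {R : realType} {n : nat} (A : 'M[R]_n)
    (x : R -> 'cV[R]_n) : Prop :=
  forall t : R, is_derive t 1 x (A *m x t).

Definition lyap_stable {R : realType} {n : nat} (A : 'M[R]_n) : Prop :=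
  forall eps : R, 0 < eps -> exists2 delta : R, 0 < delta &
    forall x : R -> 'cV[R]_n, lin_solution A x ->
      `|x 0| < delta -> forall t : R, 0 <= t -> `|x t| < eps.

(* Both hypotheses make V(x) = x^T P x a Lyapunov function.  In case 1 the
   shift coefficient c is nonpositive, so A^T P + P A < c P <= 0; in case 2 the
   two inequalities average to A^T P + P A < 0.  Hence V is nonincreasing along
   solutions.  As P is positive definite, the extrema of V on the compact unit
   sphere give m |x|^2 <= V(x) <= K |x|^2 with m, K > 0, so a solution with
   K |x(0)|^2 < m eps^2 stays in the ball of radius eps. *)

From HB Require Import structures.
From mathcomp Require Import all_boot all_order all_algebra.
From mathcomp Require Import all_classical all_reals all_analysis.
From mathcomp Require Import ring lra.
Set Implicit Arguments.
Unset Strict Implicit.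
Unset Printing Implicit Defensive.
Import Order.TTheory GRing.Theory Num.Theory.
Import numFieldNormedType.Exports.
Local Open Scope ring_scope.

Section matrix_entry_derive.
Context {R : realType} {V : normedModType R}.

Lemma is_derive_mx_entry m n (M : V -> 'M[R]_(m, n)) t v dM i j :
  is_derive t v M dM -> is_derive t v (fun s => M s i j) (dM i j).
Proof.
move=> dMtv; have dM_ex : derivable M t v by exact: ex_derive.
apply: DeriveDef; first by move/derivable_mxP : dM_ex; apply.
by rewrite -[dM]derive_val derive_mx // mxE.
Qed.

End matrix_entry_derive.

Section quadratic_forms.
Context {R : realType}.

Definition bform {n} (P : 'M[R]_n) (u v : 'cV[R]_n) : R := (u^T *m P *m v) 0 0.

Definition qform {n} (P : 'M[R]_n) (x : 'cV[R]_n) : R := bform P x x.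

Lemma bformE n (P : 'M[R]_n) u v :
  bform P u v = \sum_i \sum_j P i j * (u i 0 * v j 0).
Proof.
rewrite /bform mxE exchange_big; apply: eq_bigr => j _.
by rewrite !mxE big_distrl; apply: eq_bigr => i _; rewrite !mxE /=; ring.
Qed.

Lemma qformD n (M N : 'M[R]_n) x : qform (M + N) x = qform M x + qform N x.
Proof. by rewrite /qform /bform mulmxDr mulmxDl mxE. Qed.

Lemma qformZl n (M : 'M[R]_n) c x : qform (c *: M) x = c * qform M x.
Proof. by rewrite /qform /bform -scalemxAr -scalemxAl mxE. Qed.

Lemma qformZr n (P : 'M[R]_n) k x : qform P (k *: x) = k ^+ 2 * qform P x.
Proof. by rewrite /qform /bform !linearZ /= -!scalemxAl scalerA mxE expr2. Qed.

Lemma qform0 n (P : 'M[R]_n) : qform P 0 = 0.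
Proof. by rewrite /qform /bform mulmx0 mxE. Qed.

Lemma qform_trmx_continuous n (P : 'M[R]_n) :
  continuous (fun y : 'rV[R]_n => qform P y^T).
Proof.
have -> : (fun y : 'rV[R]_n => qform P y^T) =
    (fun y => \sum_i \sum_j P i j * (y 0 i * y 0 j)).
  apply/funext => y; rewrite /qform bformE.
  by under eq_bigr do under eq_bigr do rewrite !mxE.
apply: continuous_big => [|i _]; first exact: add_continuous.
apply: continuous_big => [|j _]; first exact: add_continuous.
move=> y; apply: (@continuousM _ _ (cst (P i j)) (fun y : 'rV[R]_n => y 0 i * y 0 j)).
  exact: cst_continuous.
by apply: continuousM; exact: coord_continuous.
Qed.

Lemma is_derive_qform n (P : 'M[R]_n) (x : R -> 'cV[R]_n) (t : R) dx :
  is_derive t 1 x dx ->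
  is_derive t 1 (fun s => qform P (x s)) (bform P dx (x t) + bform P (x t) dx).
Proof.
move=> dxt; have dxi i : is_derive t 1 (fun s => x s i 0) (dx i 0).
  exact: is_derive_mx_entry.
have -> : (fun s => qform P (x s)) =
    \sum_i \sum_j (fun s => P i j * (x s i 0 * x s j 0)).
  apply/funext => s; rewrite /qform bformE fct_sumE.
  by apply: eq_bigr => i _; rewrite fct_sumE.
eapply is_derive_eq; first by apply: is_derive_sum => i; apply: is_derive_sum.
rewrite !bformE -big_split; apply: eq_bigr => i _.
rewrite -big_split; apply: eq_bigr => j _ /=.
by rewrite /GRing.scale /=; ring.
Qed.

Lemma is_derive_qform_solution n (A P : 'M[R]_n) (x : R -> 'cV[R]_n) (t : R) :
  lin_solution A x ->
  is_derive t 1 (fun s => qform P (x s)) (qform (A^T *m P + P *m A) (x t)).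
Proof.
move=> sol; suff -> : qform (A^T *m P + P *m A) (x t) =
    bform P (A *m x t) (x t) + bform P (x t) (A *m x t) by exact: is_derive_qform.
by rewrite /qform /bform mulmxDr mulmxDl mxE trmx_mul !mulmxA addrC.
Qed.

End quadratic_forms.

Lemma norm_trmx (K : realDomainType) m n (M : 'M[K]_(m, n)) : `|M^T| = `|M|.
Proof.
suff le_trmx p q (N : 'M[K]_(p, q)) : `|N^T| <= `|N|.
  apply/le_anti/andP; split; first exact: le_trmx.
  by rewrite -{1}[M]trmxK; exact: le_trmx.
rewrite [leLHS]/Num.Def.normr /= mx_normrE; apply: bigmax_le => // -[i j] _ /=.
rewrite mxE [leRHS]/Num.Def.normr /= mx_normrE.
exact: (le_bigmax _ (fun ij : 'I_p * 'I_q => `|N ij.1 ij.2|) (j, i)).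
Qed.

Section positive_definite_bounds.
Local Open Scope classical_set_scope.
Context {R : realType}.

(* Spheres are taken in row vectors, the setting of [bounded_closed_compact]. *)
Lemma compact_unit_sphere n : compact [set y : 'rV[R]_n | `|y| = 1].
Proof.
apply: bounded_closed_compact.
  by exists 1; split => // M M1 y /= ->; exact: ltW.
rewrite (_ : [set y | _] = (fun y : 'rV[R]_n => `|y|) @^-1` [set 1]) //.
by apply: preimage_closed; [move=> y _; exact: norm_continuous | exact: closed_eq].
Qed.

Lemma qform_bounds n (P : 'M[R]_n) :
  (forall x, x != 0 -> 0 < qform P x) ->
  exists m K : R, [/\ 0 < m, 0 < K &
    forall x, m * `|x| ^+ 2 <= qform P x /\ qform P x <= K * `|x| ^+ 2].
Proof.
case: n P => [|k] P P_pos.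
  exists 1, 1; split => // x.
  by rewrite (flatmx0 x) qform0 normr0 expr2 !mulr0.
set S := [set y : 'rV[R]_k.+1 | `|y| = 1].
have S_neq0 : S !=set0.
  pose e : 'rV[R]_k.+1 := delta_mx 0 0.
  have e_neq0 : e != 0.
    by apply/eqP => /matrixP/(_ 0 0)/eqP; rewrite !mxE eqxx oner_eq0.
  by exists (`|e|^-1 *: e); exact: normfZV.
have qP_cont : {within S, continuous (fun y : 'rV[R]_k.+1 => qform P y^T)}.
  exact/continuous_subspaceT/qform_trmx_continuous.
have [c cS c_min] := compact_EVT_min S_neq0 (@compact_unit_sphere k.+1) qP_cont.
have [d dS d_max] := compact_EVT_max S_neq0 (@compact_unit_sphere k.+1) qP_cont.
have c_neq0 : c^T != 0.
  by move: cS; rewrite inE -normr_eq0 norm_trmx => /= ->; rewrite oner_eq0.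
have m_gt0 : 0 < qform P c^T by exact: P_pos.
exists (qform P c^T), (qform P d^T); split => //.
  exact: lt_le_trans m_gt0 (d_max _ cS).
move=> x; have [->|x_neq0] := eqVneq x 0.
  by rewrite qform0 normr0 expr2 !mulr0.
have x_gt0 : 0 < `|x| by rewrite normr_gt0.
pose y := (`|x|^-1 *: x)^T.
have yS : y \in S by rewrite inE /S /= norm_trmx normfZV.
have -> : qform P x = `|x| ^+ 2 * qform P y^T.
  by rewrite trmxK qformZr mulrA -exprMn mulfV ?gt_eqF // expr1n mul1r.
rewrite ![_ * `|x| ^+ 2]mulrC !ler_pM2l ?exprn_gt0 //.
by split; [exact: c_min | exact: d_max].
Qed.

End positive_definite_bounds.

Section lyapunov.
Context {R : realType}.

Lemma quadratic_domination_small (m K eps : R) :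
  0 < m -> 0 < K -> 0 < eps ->
  exists2 delta, 0 < delta & forall u w, 0 <= u -> 0 <= w -> w < delta ->
    m * u ^+ 2 <= K * w ^+ 2 -> u < eps.
Proof.
(* [delta * (m + K) = eps * m] gives both [delta <= eps] and [K * delta <= eps * m]. *)
move=> m_gt0 K_gt0 eps_gt0; exists (eps * m / (m + K)).
  by rewrite divr_gt0 ?mulr_gt0 ?addr_gt0.
move=> u w u_ge0 w_ge0; set delta := _ / _ => w_lt mu_le.
have delta_eq : delta * (m + K) = eps * m by rewrite /delta divfK // gt_eqF ?addr_gt0.
rewrite ltNge; apply/negP => eps_le.
have delta_gt0 : 0 < delta by rewrite /delta divr_gt0 ?mulr_gt0 ?addr_gt0.
have Kdelta_le : K * delta <= eps * m by nra.
have delta_le : delta <= eps by nra.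
move: mu_le; rewrite !expr2 => mu_le.
have : K * (w * w) < K * (delta * delta) by rewrite ltr_pM2l //; nra.
have : m * (eps * eps) <= m * (u * u) by rewrite ler_pM2l //; nra.
have : K * (delta * delta) <= eps * m * delta by rewrite mulrA ler_pM2r.
have : eps * m * delta <= eps * m * eps by rewrite ler_pM2l ?mulr_gt0.
lra.
Qed.

Lemma qform_solution_nonincreasing n (A P : 'M[R]_n) (x : R -> 'cV[R]_n) :
  (forall y, qform (A^T *m P + P *m A) y <= 0) -> lin_solution A x ->
  {homo (fun t => qform P (x t)) : s t /~ s <= t}.
Proof.
move=> Q_le0 sol s t le_ts.
have dV (u : R) : is_derive u 1 (fun t => qform P (x t)) (qform (A^T *m P + P *m A) (x u)).
  exact: is_derive_qform_solution.
apply: (@ler0_derive1_le_cc _ (fun u => qform P (x u)) t s) => //.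
- by move=> u _; rewrite derive1E derive_val.
- apply: continuous_subspaceT => u; apply: differentiable_continuous.
  by apply/derivable1_diffP; exact: ex_derive.
- by rewrite in_itv /= lexx le_ts.
- by rewrite in_itv /= lexx le_ts.
Qed.

Lemma lyap_stable_of_qform n (A P : 'M[R]_n) :
  posdef P -> (forall x, qform (A^T *m P + P *m A) x <= 0) -> lyap_stable A.
Proof.
move=> [_ P_pos] Q_le0 eps eps_gt0.
have [m [K [m_gt0 K_gt0 P_bounds]]] := qform_bounds P_pos.
have [delta delta_gt0 small] := quadratic_domination_small m_gt0 K_gt0 eps_gt0.
exists delta => // x sol x0_lt t t_ge0.
apply: (small _ _ (normr_ge0 _) (normr_ge0 _) x0_lt).
have [lower _] := P_bounds (x t); have [_ upper] := P_bounds (x 0).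
apply: le_trans lower (le_trans _ upper).
exact: qform_solution_nonincreasing.
Qed.

Lemma posdef_qform_ge0 n (P : 'M[R]_n) x : posdef P -> 0 <= qform P x.
Proof.
move=> [_ P_pos]; have [->|x_neq0] := eqVneq x 0; first by rewrite qform0.
exact/ltW/P_pos.
Qed.

Lemma negdef_qform_le0 n (M : 'M[R]_n) x : negdef M -> qform M x <= 0.
Proof.
move=> [_ M_neg]; have [->|x_neq0] := eqVneq x 0; first by rewrite qform0.
exact/ltW/M_neg.
Qed.

Lemma qform_le0_of_negdef_shift n (Q P : 'M[R]_n) c x :
  c <= 0 -> 0 <= qform P x -> negdef (Q - c *: P) -> qform Q x <= 0.
Proof.
move=> c_le0 P_ge0 /(negdef_qform_le0 x).
by rewrite -scaleNr qformD qformZl; nra.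
Qed.

Lemma qform_le0_of_negdef_pm n (Q P : 'M[R]_n) c x :
  negdef (Q - c *: P) -> negdef (Q + c *: P) -> qform Q x <= 0.
Proof.
move=> /(negdef_qform_le0 x) + /(negdef_qform_le0 x).
by rewrite -scaleNr !qformD !qformZl; lra.
Qed.

End lyapunov.

Theorem theorem2p4 (R : realType) (n : nat) (A : 'M[R]_n) (alpha : R) :
  0 < alpha ->
  (exists P : 'M[R]_n, posdef P /\
    ((exists beta : R, 1 <= beta /\ (beta = 1 \/ (1 < beta /\ \tr A <= 0)) /\
        negdef (A^T *m P + P *m A
                - (alpha^-1 * ((beta - 1) / (beta + 1)) * \tr A) *: P))
     \/
     (negdef (A^T *m P + P *m A - (alpha^-1 * \tr A) *: P) /\
      negdef (A^T *m P + P *m A + (alpha^-1 * \tr A) *: P)))) ->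
  lyap_stable A.
Proof.
move=> alpha_gt0 [P [P_posdef cond]].
apply: (lyap_stable_of_qform P_posdef) => x.
case: cond => [[beta [beta_ge1 [beta_cases neg]]] | [neg_minus neg_plus]].
- apply: qform_le0_of_negdef_shift (posdef_qform_ge0 x P_posdef) neg.
  case: beta_cases => [-> | [_ trA_le0]]; first by rewrite subrr mul0r mulr0 mul0r.
  apply: mulr_ge0_le0 trA_le0; apply: mulr_ge0; first by rewrite invr_ge0 ltW.
  by apply: divr_ge0; lra.
- exact: qform_le0_of_negdef_pm neg_minus neg_plus.
Qed.
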